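(* Let $N\ge 2$ be an integer and index rows and columns of $N\times N$ matrices by $0,1,\dots,N-1$. Let $H$ be the real tridiagonal $N\times N$ matrix with diagonal entries $H_{n,n}=2n-N+1$ for $n=0,\dots,N-1$, superdiagonal entries $H_{n-1,n}=\sqrt{n(N-n)}$ and subdiagonal entries $H_{n,n-1}=-\sqrt{n(N-n)}$ for $n=1,\dots,N-1$ (all other entries zero). Let $J$ be the $N\times N$ nilpotent Jordan block, $J_{n,n+1}=1$ for $n=0,\dots,N-2$ and all other entries zero. Define the diagonal matrices $C$, $F$ and the matrix $P$ by $$C_{n,n}=\sqrt{\binom{N-1}{n}},\qquad F_{n,n}=(-1)^{N-n-1}\,(N-1-n)!,\qquad P_{m,q}=\binom{N-1-m}{q}\quad (n,m,q=0,\dots,N-1),$$ with the convention $\binom{a}{b}=0$ for $b>a$. Then $Q:=C\,P\,F$ is invertible and satisfies $H\,Q=Q\,J$, i.e. $Q^{-1}HQ=J$.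
   Context: $H$ is the discrete anharmonic-oscillator Hamiltonian $H^{(N)}_{(AO)}(\lambda)$ at its exceptional point $\lambda=0$; $Q$ is called the transition matrix (it brings $H$ to the Jordan block with eigenvalue $0$). *)

(* Matrices over an arbitrary real closed field R
   (covers the real numbers; Num.sqrt is the nonnegative square root). *)
From HB Require Import structures.
From mathcomp Require Import all_boot all_order all_algebra.
Set Implicit Arguments. Unset Strict Implicit. Unset Printing Implicit Defensive.
Import Order.TTheory GRing.Theory Num.Theory.
Local Open Scope ring_scope.

Definition Hmat (R : rcfType) (N : nat) : 'M[R]_N :=
  \matrix_(i < N, j < N)
    (if (i == j :> nat) then ((2 * i)%:R - N%:R + 1)
     else if (j == i.+1 :> nat) then Num.sqrt ((j * (N - j))%:R)
     else if (i == j.+1 :> nat) then - Num.sqrt ((i * (N - i))%:R)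
     else 0).

Definition Jmat (R : rcfType) (N : nat) : 'M[R]_N :=
  \matrix_(i < N, j < N) (if (j == i.+1 :> nat) then 1 else 0).

Definition Cmat (R : rcfType) (N : nat) : 'M[R]_N :=
  \matrix_(i < N, j < N)
    (if (i == j :> nat) then Num.sqrt ('C(N.-1, i))%:R else 0).

Definition Fmat (R : rcfType) (N : nat) : 'M[R]_N :=
  \matrix_(i < N, j < N)
    (if (i == j :> nat) then (-1) ^+ (N - i - 1) * ((N - 1 - i)`!)%:R else 0).

(* binomial 'C(a,b) = 0 for b > a in mathcomp *)
Definition Pmat (R : rcfType) (N : nat) : 'M[R]_N :=
  \matrix_(m < N, q < N) ('C(N - 1 - m, q))%:R.

Definition Qmat (R : rcfType) (N : nat) : 'M[R]_N :=
  Cmat R N *m Pmat R N *m Fmat R N.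

From HB Require Import structures.
From mathcomp Require Import all_boot all_order all_algebra.
From mathcomp Require Import fingroup perm zify ring lra.
Import Order.TTheory GRing.Theory Num.Theory.
Set Implicit Arguments. Unset Strict Implicit. Unset Printing Implicit Defensive.
Local Open Scope ring_scope.

(* Conjugation by the diagonal matrix C = diag(sqrt C(N-1,i)) clears the square
   roots of H: since (i+1) C(N-1,i+1) = (N-1-i) C(N-1,i), one gets H C = C K for
   the integer tridiagonal matrix K with K_{i,i} = 2i-N+1, K_{i,i+1} = N-1-i and
   K_{i,i-1} = -i.  Row i of P lists the coefficients of (1+x)^(N-1-i), and a
   three-term relation between the binomial coefficients of (1+x)^(m-1), (1+x)^m
   and (1+x)^(m+1) gives K P = P J D with D = diag(-(N-j)).  The signed factorials
   of F are exactly the ones with J D F = F J, so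
     H Q = H C P F = C K P F = C P J D F = C P F J = Q J.
   C and F are diagonal with nonzero entries and P is the Pascal matrix with its
   rows reversed, so Q is invertible. *)

Section TridiagonalMatrices.
Variables (R : comPzRingType) (n : nat).

Definition tridiag_mx (a b c : nat -> R) : 'M[R]_n :=
  \matrix_(i, j)
    (if i == j :> nat then a i
     else if j == i.+1 :> nat then b i
     else if i == j.+1 :> nat then c i
     else 0).

Lemma tridiag_mulmx (a b c : nat -> R) (f : nat -> nat -> R) (i j : 'I_n) :
  b n.-1 = 0 -> c 0%N = 0 ->
  (tridiag_mx a b c *m \matrix_(k < n, l < n) f k l) i j
    = a i * f i j + b i * f i.+1 j + c i * f i.-1 j.
Proof.
move=> bn c0; rewrite mxE.
rewrite (eq_bigr (fun k : 'I_n => (if k == i :> nat then a i * f i j else 0)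
   + (if k == i.+1 :> nat then b i * f i.+1 j else 0)
   + (if k.+1 == i :> nat then c i * f i.-1 j else 0))); last first.
  move=> k _; rewrite !mxE; move: (k : nat) (i : nat) => {}k {}i.
  by repeat case: eqP => ?; subst; rewrite /= ?mul0r ?addr0 ?add0r //; exfalso; lia.
rewrite !big_split /= -!big_mkcond (big_ord1_eq _ (fun=> a i * f i j)).
rewrite (big_ord1_eq _ (fun=> b i * f i.+1 j)) ltn_ord.
have -> : (if (i.+1 < n)%N then b i * f i.+1 j else 0) = b i * f i.+1 j.
  case: ltnP => // le_n_i1.
  by rewrite (_ : nat_of_ord i = n.-1) ?bn ?mul0r //; have := ltn_ord i; lia.
congr (_ + _); case: i => [[|i] /= lti]; first by rewrite big_pred0 // c0 mul0r.
by rewrite (big_ord1_eq _ (fun=> c i.+1 * f i j)) ltnW.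
Qed.

Lemma tridiag_mx_diag_conj (a b c b' c' d : nat -> R) :
  (forall i, b i * d i.+1 = d i * b' i) ->
  (forall i, c i.+1 * d i = d i.+1 * c' i.+1) ->
  tridiag_mx a b c *m diag_mx (\row_(i < n) d i)
    = diag_mx (\row_(i < n) d i) *m tridiag_mx a b' c'.
Proof.
move=> hb hc; apply/matrixP => i j; rewrite mul_mx_diag mul_diag_mx !mxE.
move: (i : nat) (j : nat) => {}i {}j.
case: eqP => [->|_]; first exact: mulrC.
case: eqP => [->|_]; first exact: hb.
case: eqP => [->|_]; first exact: hc.
by rewrite mul0r mulr0.
Qed.

End TridiagonalMatrices.

Lemma sqrt_nat_balance (R : rcfType) (a b x y : nat) : (a * x = b * y)%N ->
  Num.sqrt (a * b)%:R * Num.sqrt x%:R = b%:R * Num.sqrt y%:R :> R.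
Proof.
move=> axby; rewrite -sqrtrM ?ler0n // -natrM mulnAC axby mulnAC natrM.
by rewrite sqrtrM ?ler0n // natrM -expr2 sqrtr_sqr ger0_norm.
Qed.

Lemma bin_three_term (i m j : nat) :
  (2 * i * 'C(m, j.+1) + m * 'C(m.-1, j.+1) + (i + m - j) * 'C(m, j)
   = (i + m) * 'C(m, j.+1) + i * 'C(m.+1, j.+1))%N.
Proof.
have down := mul_bin_down m j.+1; have left := mul_bin_left m j.
rewrite binS down.
case: (leqP j m) => [le_jm | lt_mj]; first nia.
by rewrite !bin_small //; lia.
Qed.

Section TransitionMatrix.
Variables (R : rcfType) (N : nat).

Definition Kmat : 'M[R]_N :=
  tridiag_mx N (fun i => (2 * i)%:R - N%:R + 1) (fun i => (N - i.+1)%:R)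
    (fun i => - i%:R).

Definition Dmat : 'M[R]_N := diag_mx (\row_(j < N) - (N - j)%:R).

Lemma Hmat_tridiag :
  Hmat R N = tridiag_mx N (fun i => (2 * i)%:R - N%:R + 1)
    (fun i => Num.sqrt (i.+1 * (N - i.+1))%:R) (fun i => - Num.sqrt (i * (N - i))%:R).
Proof.
apply/matrixP => i j; rewrite !mxE; move: (i : nat) (j : nat) => {}i {}j.
by case: eqP => // _; case: eqP => [->|].
Qed.

Lemma Cmat_diag : Cmat R N = diag_mx (\row_(i < N) Num.sqrt 'C(N.-1, i)%:R).
Proof.
apply/matrixP => i j; rewrite !mxE.
by case: (i =P j) => [->|/eqP ne]; rewrite ?eqxx // ifN // (negbTE ne).
Qed.

Lemma Fmat_diag :
  Fmat R N = diag_mx (\row_(i < N) ((-1) ^+ (N - i - 1) * ((N - 1 - i)`!)%:R)).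
Proof.
apply/matrixP => i j; rewrite !mxE.
by case: (i =P j) => [->|/eqP ne]; rewrite ?eqxx // ifN // (negbTE ne).
Qed.

Lemma mulmx_Jmat (f : nat -> nat -> R) (i j : 'I_N) :
  (\matrix_(k < N, l < N) f k l *m Jmat R N) i j
    = if nat_of_ord j is j'.+1 then f i j' else 0.
Proof.
rewrite mxE; case: j => [[|j] /= ltj]; first by rewrite big1 // => k _; rewrite !mxE mulr0.
rewrite (eq_bigr (fun k : 'I_N => if k == j :> nat then f i j else 0)) => [|k _].
  by rewrite -big_mkcond (big_ord1_eq _ (fun=> f i j)) ltnW.
by rewrite !mxE eqSS eq_sym; case: eqP => [->|]; rewrite ?mulr1 ?mulr0.
Qed.

Lemma HC_CK : Hmat R N *m Cmat R N = Cmat R N *m Kmat.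
Proof.
have bin_step i : (i.+1 * 'C(N.-1, i.+1) = (N - i.+1) * 'C(N.-1, i))%N.
  by rewrite mul_bin_left; congr (_ * _)%N; lia.
rewrite Hmat_tridiag Cmat_diag /Kmat.
apply: (@tridiag_mx_diag_conj _ N _ _ _ _ _ (fun i => Num.sqrt 'C(N.-1, i)%:R)) => i.
  by rewrite (sqrt_nat_balance _ (bin_step i)) mulrC.
by rewrite mulNr mulrN [(i.+1 * _)%N]mulnC (sqrt_nat_balance _ (esym (bin_step i))) mulrC.
Qed.

Lemma KP_PJD : Kmat *m Pmat R N = Pmat R N *m Jmat R N *m Dmat.
Proof.
pose binP k l := 'C(N - 1 - k, l)%:R : R.
apply/matrixP => i j; rewrite mul_mx_diag mxE /Pmat (mulmx_Jmat binP) /Kmat.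
rewrite (tridiag_mulmx _ binP); last 2 first.
- by rewrite (_ : N - N.-1.+1 = 0)%N //; lia.
- by rewrite oppr0.
rewrite !mxE /binP; move: (i : nat) (j : nat) (ltn_ord i) (ltn_ord j) => {}i {}j lti ltj.
have [m eN] : exists m, N = (i + m).+1 by exists (N - i.+1)%N; lia.
have -> : (N - 1 - i = m)%N by lia.
have -> : (N - i.+1 = m)%N by lia.
have -> : (N - 1 - i.+1 = m.-1)%N by lia.
rewrite mulNr.
have -> : i%:R * 'C(N - 1 - i.-1, j)%:R = i%:R * 'C(m.+1, j)%:R :> R.
  by case: i {lti} eN => [|i] eN; rewrite ?mul0r // (_ : N - 1 - i = m.+1)%N //; lia.
rewrite eN; case: j ltj => [|j] ltj.
  by rewrite !bin0 !mulr1 mul0r -natr1 natrD natrM; lra.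
have := bin_three_term i m j; move/(congr1 (fun k => k%:R : R)).
move: 'C(m, j.+1) 'C(m.-1, j.+1) 'C(m.+1, j.+1) 'C(m, j) => X Xd Xu Y.
rewrite subSS -[(i + m).+1%:R]natr1 !natrM !natrD; lra.
Qed.

Lemma JDF_FJ : Jmat R N *m Dmat *m Fmat R N = Fmat R N *m Jmat R N.
Proof.
rewrite Fmat_diag /Dmat -mulmxA mulmx_diag mul_mx_diag mul_diag_mx.
apply/matrixP => i j; rewrite !mxE; move: (i : nat) (j : nat) (ltn_ord j) => {}i {}j ltj.
case: eqP ltj => [-> lt_i1N|_ _]; last by rewrite mul0r mulr0.
rewrite -!subnDA !addn1 !add1n -(subnSK lt_i1N).
by rewrite factS natrM exprS; ring.
Qed.

Lemma Cmat_unit : Cmat R N \in unitmx.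
Proof.
rewrite Cmat_diag unitmxE det_diag unitfE; apply/prodf_neq0 => i _.
by rewrite mxE sqrtr_eq0 -ltNge ltr0n bin_gt0; have := ltn_ord i; lia.
Qed.

Lemma Fmat_unit : Fmat R N \in unitmx.
Proof.
rewrite Fmat_diag unitmxE det_diag unitfE; apply/prodf_neq0 => i _.
by rewrite mxE mulf_neq0 ?signr_eq0 // pnatr_eq0 -lt0n fact_gt0.
Qed.

Lemma Pmat_unit : Pmat R N \in unitmx.
Proof.
have -> : Pmat R N = row_perm (perm (@rev_ord_inj N)) (\matrix_(a < N, q < N) 'C(a, q)%:R).
  apply/matrixP => a q; rewrite !mxE permE /=.
  by rewrite (_ : N - 1 - a = N - a.+1)%N //; lia.
rewrite row_permE unitmx_mul unitmx_perm unitmxE det_trig.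
  by rewrite big1 ?unitr1 // => a _; rewrite mxE binn.
by apply/is_trig_mxP => a q lt_aq; rewrite mxE bin_small.
Qed.

End TransitionMatrix.

Theorem mainTheorem2 (R : rcfType) (N : nat) (hN : (2 <= N)%N) :
  Qmat R N \in unitmx /\ Hmat R N *m Qmat R N = Qmat R N *m Jmat R N.
Proof.
split; first by rewrite /Qmat !unitmx_mul Cmat_unit Pmat_unit Fmat_unit.
rewrite /Qmat -!mulmxA (mulmxA (Hmat R N)) HC_CK.
rewrite -!mulmxA (mulmxA (Kmat R N)) KP_PJD.
by rewrite -!mulmxA (mulmxA (Jmat R N)) JDF_FJ.
Qed.
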